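(* Let $K$ be an algebraically closed field, $Q$ a quiver, $\mathcal X$ a $K$-linear representation of $Q$ such that $\mathrm{Ext}^1_{KQ}(G(\mathcal X),KQ)=0$, and $P$ a closed subquiver of $Q$. Then $\mathrm{Ext}^1_{KP}(G(\mathcal X\restriction P),KP)=0$.
   Context: A quiver $Q=(Q_0,Q_1)$ is a directed graph with vertices $Q_0$ and arrows $Q_1$ (arrow $a$ has source $s(a)$, target $t(a)$). Paths are composable sequences of arrows written left to right, with trivial paths $e_v$; the path algebra $KQ$ has $K$-basis all paths, with product = concatenation when the target of the first equals the source of the second, else $0$. Modules are right modules. A $K$-linear representation $\mathcal X$ of $Q$ consists of $K$-vector spaces $\mathcal X_v$ ($v\in Q_0$) and $K$-linear maps $\mathcal X_a:\mathcal X_{s(a)}\to\mathcal X_{t(a)}$ ($a\in Q_1$). $G(\mathcal X)$ is the $KQ$-module with underlying space $\bigoplus_{v\in Q_0}\mathcal X_v$, with $m e_w$ the $\mathcal X_w$-component of $m$ and $m a:=\mathcal X_a(m e_{s(a)})$, extended by distributivity. A subquiver $P=(P_0,P_1)$ has $P_0\subseteq Q_0$, $P_1\subseteq Q_1$ with sources and targets of arrows of $P_1$ in $P_0$; $\mathcal X\restriction P$ is the representation of $P$ with the same spaces and maps on $P_0,P_1$. For $S\subseteq Q_0$, the closure $\overline{S}^Q$ is the subquiver whose vertices are those reachable by a path in $Q$ from a vertex of $S$ (including $S$ itself) and whose arrows are all arrows of $Q$ with source among these vertices. A closed subquiver is one of the form $\overline{S}^Q$ for some $S\subseteq Q_0$.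 *)

From HB Require Import structures.
From mathcomp Require Import all_boot all_order all_algebra.
From mathcomp Require Import boolp.
Set Implicit Arguments. Unset Strict Implicit. Unset Printing Implicit Defensive.
Import Order.TTheory GRing.Theory.
Local Open Scope ring_scope.

Section DirectSum.
Variable K : fieldType.
Variable I : eqType.
Variable X : I -> lmodType K.

Definition fin_supp (f : forall i, X i) : Prop :=
  exists s : seq I, forall i, f i != 0 -> i \in s.

Record dsum := DSum { dfun :> forall i, X i; dfunP : fin_supp dfun }.

HB.instance Definition _ := gen_eqMixin dsum.
HB.instance Definition _ := gen_choiceMixin dsum.

Lemma dsum_ext (f g : dsum) : (forall i, f i = g i) -> f = g.
Proof.
case: f g => f fP [g gP] /= efg.
have efg' := functional_extensionality_dep efg; subst g; congr DSum; apply: Prop_irrelevance.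
Qed.

Lemma fin_supp0 : fin_supp (fun i => 0).
Proof. by exists [::] => i; rewrite eqxx. Qed.

Lemma fin_suppD (f g : dsum) : fin_supp (fun i => f i + g i).
Proof.
case: (dfunP f) => s Hs; case: (dfunP g) => t Ht; exists (s ++ t) => i Hi.
rewrite mem_cat; apply/orP.
case: (boolP (f i == 0)) => [/eqP f0|/Hs]; last by left.
by right; apply: Ht; rewrite f0 add0r in Hi.
Qed.

Lemma fin_suppZ (c : K) (f : dsum) : fin_supp (fun i => c *: f i).
Proof.
case: (dfunP f) => s Hs; exists s => i Hi; apply: Hs.
by apply: contraNneq Hi => ->; rewrite scaler0.
Qed.

Definition dsum0 := DSum fin_supp0.
Definition dsum_add f g := DSum (fin_suppD f g).
Definition dsum_scale c f := DSum (fin_suppZ c f).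
Definition dsum_opp f := dsum_scale (-1) f.

Lemma dsum_addA : associative dsum_add.
Proof. by move=> f g h; apply: dsum_ext => i /=; rewrite addrA. Qed.
Lemma dsum_addC : commutative dsum_add.
Proof. by move=> f g; apply: dsum_ext => i /=; rewrite addrC. Qed.
Lemma dsum_add0 : left_id dsum0 dsum_add.
Proof. by move=> f; apply: dsum_ext => i /=; rewrite add0r. Qed.
Lemma dsum_addN : left_inverse dsum0 dsum_opp dsum_add.
Proof. by move=> f; apply: dsum_ext => i /=; rewrite scaleN1r addNr. Qed.

HB.instance Definition _ :=
  GRing.isZmodule.Build dsum dsum_addA dsum_addC dsum_add0 dsum_addN.

Lemma dsum_scaleA a b f : dsum_scale a (dsum_scale b f) = dsum_scale (a * b) f.
Proof. by apply: dsum_ext => i /=; rewrite scalerA. Qed.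
Lemma dsum_scale1 : left_id 1 dsum_scale.
Proof. by move=> f; apply: dsum_ext => i /=; rewrite scale1r. Qed.
Lemma dsum_scaleDr : right_distributive dsum_scale +%R.
Proof. by move=> a f g; apply: dsum_ext => i /=; rewrite scalerDr. Qed.
Lemma dsum_scaleDl f : {morph dsum_scale^~ f : a b / a + b}.
Proof. by move=> a b; apply: dsum_ext => i /=; rewrite scalerDl. Qed.

HB.instance Definition _ :=
  GRing.Zmodule_isLmodule.Build K dsum dsum_scaleA dsum_scale1 dsum_scaleDr dsum_scaleDl.

Definition dsupp (f : dsum) : seq I := undup (projT1 (cid (dfunP f))).

Definition dinj_fun (v : I) (x : X v) : forall w, X w :=
  fun w => if v =P w is ReflectT e then eq_rect v X x w e else 0.

Lemma fin_supp_inj v (x : X v) : fin_supp (dinj_fun x).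
Proof.
exists [:: v] => w; rewrite /dinj_fun mem_seq1; case: eqP => [e _|_].
  by apply/eqP.
by rewrite eqxx.
Qed.

Definition dinj v (x : X v) : dsum := DSum (fin_supp_inj x).

End DirectSum.

Record quiver := Quiver {
  vert : eqType;
  arr : eqType;
  src : arr -> vert;
  tgt : arr -> vert }.

Section Quiver.
Variable Q : quiver.

(** a path is a starting vertex together with a (possibly empty) composable
    sequence of arrows, written left to right *)
Definition valid_path (x : vert Q * seq (arr Q)) : bool :=
  if x.2 is a :: s then (src a == x.1) && path (fun a b => tgt a == src b) a s
  else true.

Definition qpath := {x : vert Q * seq (arr Q) | valid_path x}.

Definition pstart (p : qpath) : vert Q := (val p).1.
Definition parrs (p : qpath) : seq (arr Q) := (val p).2.
Definition pend (p : qpath) : vert Q := last (pstart p) (map (@tgt Q) (parrs p)).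

Definition ptriv (v : vert Q) : qpath := exist valid_path (v, [::]) isT.

Definition pcat (p q : qpath) : option qpath :=
  if pend p == pstart q then insub (pstart p, parrs p ++ parrs q) else None.

End Quiver.

Section PathAlgebra.
Variable K : fieldType.
Variable Q : quiver.

Definition KQ := dsum (fun _ : qpath Q => (K^o : lmodType K)).

Definition kqbasis (p : qpath Q) : KQ :=
  @dinj K _ (fun _ : qpath Q => (K^o : lmodType K)) p (1 : K^o).

Definition kqmul (x y : KQ) : KQ :=
  \sum_(p <- dsupp x) \sum_(q <- dsupp y)
     ((x p : K) * (y q : K)) *: (if pcat p q is Some r then kqbasis r else 0).

(** right KQ-modules: a K-vector space with a bilinear, associative right
    action of KQ, which is unital (M KQ = M, equivalently every element is
    fixed by some element of KQ, as KQ has local units) *)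
Record is_kqmod (V : lmodType K) (act : V -> KQ -> V) : Prop := {
  actDl : forall v w x, act (v + w) x = act v x + act w x;
  actDr : forall v x y, act v (x + y) = act v x + act v y;
  actZl : forall (c : K) v x, act (c *: v) x = c *: act v x;
  actZr : forall (c : K) v x, act v (c *: x) = c *: act v x;
  actA : forall v x y, act (act v x) y = act v (kqmul x y);
  act_unital : forall v, exists x, act v x = v }.

Definition is_kqhom (V W : lmodType K) (actV : V -> KQ -> V) (actW : W -> KQ -> W)
  (f : V -> W) : Prop :=
  (forall u v, f (u + v) = f u + f v) /\ (forall v x, f (actV v x) = actW (f v) x).

(** Ext^1_{KQ}(M, N) = 0 (Yoneda description): every short exact sequence
    0 -> N -> E -> M -> 0 of right KQ-modules splits *)
Definition ext1_zero (M : lmodType K) (actM : M -> KQ -> M)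
  (N : lmodType K) (actN : N -> KQ -> N) : Prop :=
  forall (E : lmodType K) (actE : E -> KQ -> E), is_kqmod actE ->
  forall (i : N -> E) (pi : E -> M),
    is_kqhom actN actE i -> is_kqhom actE actM pi ->
    injective i -> (forall m, exists e, pi e = m) ->
    (forall e, pi e = 0 <-> exists n, i n = e) ->
  exists sigma : M -> E, is_kqhom actM actE sigma /\ forall m, pi (sigma m) = m.

Record rep := Rep {
  rsp : vert Q -> lmodType K;
  rmap : forall a : arr Q, {linear rsp (src a) -> rsp (tgt a)} }.

Section GFunctor.
Variable X : rep.

Definition GX := dsum (rsp X).

(** m e_v = X_v-component of m *)
Definition gtriv (m : GX) (v : vert Q) : GX := @dinj K _ (rsp X) v (m v).
(** m a = X_a (m e_{s(a)}) *)
Definition garr (m : GX) (a : arr Q) : GX :=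
  @dinj K _ (rsp X) (tgt a) (rmap X a (m (src a))).
Definition gpath (m : GX) (p : qpath Q) : GX :=
  foldl garr (gtriv m (pstart p)) (parrs p).
Definition gact (m : GX) (x : KQ) : GX :=
  \sum_(p <- dsupp x) (x p : K) *: gpath m p.

End GFunctor.
End PathAlgebra.

Record subquiver (Q : quiver) := Subquiver {
  sv : pred (vert Q);
  sa : pred (arr Q);
  sa_src : forall a, sa a -> sv (src a);
  sa_tgt : forall a, sa a -> sv (tgt a) }.

Definition sub_quiver (Q : quiver) (P : subquiver Q) : quiver :=
  @Quiver {v : vert Q | sv P v} {a : arr Q | sa P a}
    (fun a => exist (sv P) (src (val a)) (sa_src (valP a)))
    (fun a => exist (sv P) (tgt (val a)) (sa_tgt (valP a))).

Definition closed_subquiver (Q : quiver) (P : subquiver Q) : Prop :=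
  exists S : vert Q -> Prop,
    (forall v, sv P v <-> exists p : qpath Q, S (pstart p) /\ pend p = v) /\
    (forall a, sa P a <-> sv P (src a)).

Definition rep_restrict (K : fieldType) (Q : quiver) (X : rep K Q) (P : subquiver Q)
  : rep K (sub_quiver P) :=
  @Rep K (sub_quiver P) (fun v => rsp X (val v)) (fun a => rmap X (val a)).

From HB Require Import structures.
From mathcomp Require Import all_boot all_order all_algebra.
From mathcomp Require Import boolp.
From mathcomp Require classical_sets.
Set Implicit Arguments. Unset Strict Implicit. Unset Printing Implicit Defensive.
Import Order.TTheory GRing.Theory.
Local Open Scope ring_scope.

(* Fix a K-linear section of the projection E -> G(X|P) of an extension
   0 -> KP -> E -> G(X|P) -> 0.  For an arrow a of P, the section fails to commute
   with a by a linear map X_s(a) -> KP, its defect.  Pushed into KQ and extended by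
   zero to the arrows of Q outside P, the defects twist the action of KQ on
   KQ (+) G(X) into an extension of G(X) by KQ, which splits by hypothesis.
   Composing a splitting with the map back to E that sends KQ to KP (killing the
   paths that leave P) and G(X) to E along the section yields a splitting of E. *)

Lemma linear_fun0 (K : pzRingType) (U V : lmodType K) (f : U -> V) : linear f -> f 0 = 0.
Proof.
move=> f_lin; have := f_lin 1 0 0; rewrite !scale1r addr0 => f0D.
by apply: (@addrI _ (f 0)); rewrite addr0 -f0D.
Qed.

Lemma pair_sumE (U V : nmodType) (J : Type) (r : seq J) (F : J -> U * V) :
  \sum_(j <- r) F j = (\sum_(j <- r) (F j).1, \sum_(j <- r) (F j).2).
Proof. by elim: r => [|j r IHr]; rewrite ?big_nil ?big_cons // IHr. Qed.

Section DirectSum.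
Variables (K : fieldType) (I : eqType) (X : I -> lmodType K).
Implicit Types x y : dsum X.

Lemma dsum_addE x y i : (x + y) i = x i + y i. Proof. by []. Qed.
Lemma dsum_scaleE c x i : (c *: x) i = c *: x i. Proof. by []. Qed.

Lemma dsum_sumE (J : Type) (r : seq J) (F : J -> dsum X) i :
  (\sum_(j <- r) F j) i = \sum_(j <- r) F j i.
Proof. by elim: r => [|j r IHr]; rewrite ?big_nil ?big_cons // dsum_addE IHr. Qed.

Lemma mem_dsupp x i : x i != 0 -> i \in dsupp x.
Proof. by rewrite /dsupp mem_undup; case: cid => s /= Hs; apply: Hs. Qed.

Lemma dsupp_uniq x : uniq (dsupp x). Proof. exact: undup_uniq. Qed.

Lemma dinj_self i (u : X i) : dinj u i = u.
Proof.
rewrite /dinj /dinj_fun /=; case: eqP => // e.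
by rewrite (eq_irrelevance e erefl).
Qed.

Lemma dinj_other i j (u : X i) : i != j -> dinj u j = 0.
Proof. by rewrite /dinj /dinj_fun /=; case: eqP. Qed.

Section Injection.
Variable i : I.

Lemma dinj_is_linear : linear (@dinj K I X i).
Proof.
move=> c u v; apply: dsum_ext => j; rewrite dsum_addE dsum_scaleE.
have [<-|ne] := eqVneq i j; first by rewrite !dinj_self.
by rewrite !dinj_other // scaler0 addr0.
Qed.

HB.instance Definition _ :=
  GRing.isLinear.Build K (X i) (dsum X) *:%R (@dinj K I X i) dinj_is_linear.
End Injection.

Section Recursion.
Variable V : lmodType K.
Local Unset Implicit Arguments.
Variable F : forall i, X i -> V.
Hypothesis F_linear : forall i, linear (F i).
Local Set Implicit Arguments.

Definition dsum_rec x : V := \sum_(i <- dsupp x) F i (x i).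

Lemma dsum_recE s x : uniq s -> (forall i, x i != 0 -> i \in s) ->
  dsum_rec x = \sum_(i <- s) F i (x i).
Proof.
move=> s_uniq s_supp.
have drop0 r : \sum_(i <- r) F i (x i) = \sum_(i <- r | x i != 0) F i (x i).
  by rewrite [RHS]big_mkcond; apply: eq_bigr => i _; case: eqP => // ->; rewrite linear_fun0.
rewrite /dsum_rec (drop0 (dsupp x)) (drop0 s) -big_filter -[RHS]big_filter.
apply/perm_big/uniq_perm.
- exact/filter_uniq/dsupp_uniq.
- exact: filter_uniq.
by move=> i; rewrite !mem_filter; case: (boolP (x i != 0)) => //= /[dup] /s_supp -> /mem_dsupp.
Qed.

Lemma dsum_rec_is_linear : linear dsum_rec.
Proof.
move=> c x y; set s := undup (dsupp x ++ dsupp y ++ dsupp (c *: x + y)).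
have s_supp i z : z \in [:: x; y; c *: x + y] -> z i != 0 -> i \in s.
  by rewrite !inE => /or3P [] /eqP -> /mem_dsupp;
    rewrite /s mem_undup !mem_cat => ->; rewrite ?orbT.
rewrite !(@dsum_recE s) ?undup_uniq //.
2-4: by move=> i; apply: s_supp; rewrite !inE eqxx ?orbT.
rewrite scaler_sumr -big_split; apply: eq_bigr => i _.
by rewrite dsum_addE dsum_scaleE F_linear.
Qed.

Lemma dsum_rec_dinj i u : dsum_rec (dinj u) = F i u.
Proof.
rewrite (@dsum_recE [:: i]) ?big_seq1 ?dinj_self // => j.
by rewrite mem_seq1; have [//|ne] := eqVneq j i; rewrite dinj_other ?eqxx // eq_sym.
Qed.

End Recursion.

Lemma dsum_rec_eq (V : lmodType K) (F G : forall i, X i -> V) x :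
  (forall i, F i (x i) = G i (x i)) -> dsum_rec F x = dsum_rec G x.
Proof. by move=> FG; apply: eq_bigr => i _. Qed.

Lemma dsum_rec_comp (V W : lmodType K) (F : forall i, X i -> V) (g : {linear V -> W}) x :
  g (dsum_rec F x) = dsum_rec (fun i u => g (F i u)) x.
Proof. exact: linear_sum. Qed.

Lemma dsum_rec_single (V : lmodType K) (F : forall i, X i -> V) i x :
  (forall j, linear (F j)) -> (forall j u, j != i -> F j u = 0) ->
  dsum_rec F x = F i (x i).
Proof.
move=> F_linear F_other; rewrite (@dsum_recE _ _ F_linear (undup (i :: dsupp x))).
- rewrite (bigD1_seq i) ?undup_uniq ?mem_undup ?mem_head //=.
  by rewrite big1 => [|j ne]; [apply: addr0 | apply: F_other].
- exact: undup_uniq.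
by move=> j /mem_dsupp; rewrite mem_undup inE => ->; rewrite orbT.
Qed.

Lemma dsum_rec_dinj_id x : dsum_rec (@dinj K I X) x = x.
Proof.
apply: dsum_ext => j; rewrite dsum_sumE -/(dsum_rec (fun i u => dinj u j) x).
rewrite (@dsum_rec_single _ _ j) ?dinj_self // => [i|i u ne].
  by move=> c u v; rewrite linearP.
by rewrite dinj_other // eq_sym.
Qed.

End DirectSum.

Section Paths.
Variable Q : quiver.
Implicit Types (p q r : qpath Q) (a : arr Q).

Lemma pcat_valid p q : pend p = pstart q -> valid_path (pstart p, parrs p ++ parrs q).
Proof.
case: p q => [[v s] /= Hp] [[w t] /= Hq]; rewrite /pend /pstart /parrs /= => e.
case: s Hp e => [|a s] /= Hp e; first by subst w.
case/andP: Hp => sa ps; apply/andP; split => //.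
rewrite cat_path ps /=; case: t Hq => [|b t] //= /andP [sb pt].
by rewrite pt andbT (eqP sb) -e last_map eqxx.
Qed.

Lemma pcat_defined p q (e : pend p = pstart q) :
  pcat p q = Some (exist (@valid_path Q) _ (pcat_valid e)).
Proof.
rewrite /pcat e eqxx; case: insubP => [u _ E|]; last by rewrite (pcat_valid e).
by congr Some; apply: val_inj; rewrite E.
Qed.

Lemma pcat_undefined p q : pend p != pstart q -> pcat p q = None.
Proof. by rewrite /pcat => /negbTE ->. Qed.

Lemma pcat_Some p q r : pcat p q = Some r ->
  pend p = pstart q /\ val r = (pstart p, parrs p ++ parrs q).
Proof. by rewrite /pcat; case: eqP => // e; case: insubP => //= u _ E [<-]. Qed.

Lemma pcat_ptrivr p w : pcat p (ptriv w) = if pend p == w then Some p else None.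
Proof.
case: eqP => e; last by rewrite pcat_undefined //; apply/eqP.
rewrite (pcat_defined (e : pend p = pstart (ptriv w))); congr Some; apply: val_inj.
by rewrite /= /parrs /= cats0; case: p e => [[]].
Qed.

Lemma pcat_ptrivl w q : pcat (ptriv w) q = if w == pstart q then Some q else None.
Proof.
case: eqP => e; last by rewrite pcat_undefined //; apply/eqP.
rewrite (pcat_defined (e : pend (ptriv w) = pstart q)); congr Some; apply: val_inj.
by rewrite /= e; case: q e => [[]].
Qed.

Lemma pcatA p q r :
  obind (fun pq => pcat pq r) (pcat p q) = obind (pcat p) (pcat q r).
Proof.
have [pq|npq] := eqVneq (pend p) (pstart q); last first.
  rewrite pcat_undefined //=; case qr_def: (pcat q r) => [qr|] //=.
  by case/pcat_Some: qr_def => _ E; rewrite pcat_undefined // /pstart E.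
have [qr|nqr] := eqVneq (pend q) (pstart r); last first.
  rewrite (pcat_undefined nqr) (pcat_defined pq) /= pcat_undefined //.
  by rewrite /pend /= map_cat last_cat -/(pend p) pq.
rewrite (pcat_defined pq) (pcat_defined qr) /=.
have pq_r : pend (exist (@valid_path Q) _ (pcat_valid pq)) = pstart r.
  by rewrite /pend /= map_cat last_cat -/(pend p) pq.
have p_qr : pend p = pstart (exist (@valid_path Q) _ (pcat_valid qr)) by [].
rewrite (pcat_defined pq_r) (pcat_defined p_qr).
by congr Some; apply: val_inj; rewrite /= catA.
Qed.

Lemma parr_valid a : valid_path (src a, [:: a]).
Proof. by rewrite /valid_path /= eqxx. Qed.

Definition parr a : qpath Q := exist (@valid_path Q) _ (parr_valid a).

Lemma pcat_parr_Some p a r : pcat p (parr a) = Some r ->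
  [/\ pstart r = pstart p, parrs r = rcons (parrs p) a & pend p = src a].
Proof. by case/pcat_Some => e E; rewrite /pstart /parrs E /= cats1. Qed.

Lemma path_ind (C : qpath Q -> Prop) :
  (forall w, C (ptriv w)) ->
  (forall p a r, pcat p (parr a) = Some r -> C p -> C r) ->
  forall p, C p.
Proof.
move=> Ctriv Cparr [[v s] vs]; elim/last_ind: s vs => [|s a IHs] vs.
  by have -> : exist _ (v, [::]) vs = ptriv v by apply: val_inj.
have [vs' e] : valid_path (v, s) /\ last v (map (@tgt Q) s) = src a.
  move: vs; rewrite /valid_path /=; case: s {IHs} => [|b s] /=.
    by rewrite andbT => /eqP ->.
  by rewrite rcons_path => /andP [-> /andP [-> /eqP <-]]; rewrite last_map.
apply: (Cparr (exist _ (v, s) vs') a) => //.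
rewrite (pcat_defined (e : pend (exist _ (v, s) vs') = pstart (parr a))).
by congr Some; apply: val_inj; rewrite /= cats1.
Qed.

End Paths.

Section LinearCombinations.
Variables (K : fieldType) (Q : quiver).
Local Notation KQ := (KQ K Q).
Implicit Types (x y : KQ) (p q r : qpath Q).

Section FixedFunction.
Variables (V : lmodType K) (F : qpath Q -> V).

Definition lincomb x : V := \sum_(p <- dsupp x) x p *: F p.

Let scaleF_linear p : linear (fun c : K^o => c *: F p).
Proof. by move=> c u v; rewrite scalerDl scalerA. Qed.

Lemma lincomb_is_linear : linear lincomb.
Proof. exact: dsum_rec_is_linear scaleF_linear. Qed.

HB.instance Definition _ :=
  GRing.isLinear.Build K KQ V *:%R lincomb lincomb_is_linear.

Lemma lincomb_basis p : lincomb (kqbasis K p) = F p.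
Proof.
by rewrite -[RHS]scale1r -(dsum_rec_dinj scaleF_linear).
Qed.

End FixedFunction.

Section Functions.
Variable V : lmodType K.
Implicit Types F G : qpath Q -> V.

Lemma eq_lincomb F G x : {in dsupp x, F =1 G} -> lincomb F x = lincomb G x.
Proof. by move=> FG; apply: eq_big_seq => p /FG ->. Qed.

Lemma lincomb_funD F G x : lincomb (F \+ G) x = lincomb F x + lincomb G x.
Proof. by rewrite /lincomb -big_split; apply: eq_bigr => p _; rewrite scalerDr. Qed.

Lemma lincomb_funZ c F x : lincomb (fun p => c *: F p) x = c *: lincomb F x.
Proof. by rewrite /lincomb scaler_sumr; apply: eq_bigr => p _; rewrite !scalerA mulrC. Qed.

Lemma lincomb_fun0 x : lincomb (fun _ => 0 : V) x = 0.
Proof. by rewrite /lincomb big1 // => p _; rewrite scaler0. Qed.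

Lemma lincomb_fun_sum (J : Type) (s : seq J) (F : J -> qpath Q -> V) x :
  lincomb (fun p => \sum_(j <- s) F j p) x = \sum_(j <- s) lincomb (F j) x.
Proof.
rewrite /lincomb exchange_big; apply: eq_bigr => p _ /=; exact: scaler_sumr.
Qed.

Lemma lincomb_comp (W : lmodType K) F (g : {linear V -> W}) x :
  g (lincomb F x) = lincomb (fun p => g (F p)) x.
Proof. by rewrite linear_sum; apply: eq_bigr => p _; rewrite linearZ. Qed.

Lemma lincomb_swap (C : qpath Q -> qpath Q -> V) x y :
  lincomb (fun q => lincomb (C^~ q) x) y = lincomb (fun p => lincomb (C p) y) x.
Proof.
rewrite /lincomb; under [RHS]eq_bigr do rewrite scaler_sumr.
rewrite exchange_big.
by apply: eq_bigr => q _; rewrite scaler_sumr; apply: eq_bigr => p _; rewrite !scalerA mulrC.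
Qed.

End Functions.

Lemma lincomb_pair (V W : lmodType K) (F : qpath Q -> V * W) x :
  lincomb F x = (lincomb (fun p => (F p).1) x, lincomb (fun p => (F p).2) x).
Proof. exact: pair_sumE. Qed.

Lemma lincomb_basis_id x : lincomb (@kqbasis K Q) x = x.
Proof.
rewrite -[RHS]dsum_rec_dinj_id; apply: eq_bigr => p _.
by rewrite -linearZ /=; congr dinj; apply: mulr1.
Qed.

Definition kqcat p q : KQ := if pcat p q is Some r then kqbasis K r else 0.

Lemma kqmulE x y : kqmul x y = lincomb (fun p => lincomb (kqcat p) y) x.
Proof.
apply: eq_bigr => p _; rewrite scaler_sumr.
by apply: eq_bigr => q _; rewrite scalerA.
Qed.

Lemma kqmul_basis p q : kqmul (kqbasis K p) (kqbasis K q) = kqcat p q.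
Proof. by rewrite kqmulE !lincomb_basis. Qed.

Lemma kqmul_basisr x q : kqmul x (kqbasis K q) = lincomb (kqcat^~ q) x.
Proof. by rewrite kqmulE; apply: eq_lincomb => p _; rewrite lincomb_basis. Qed.

Section FixedLeft.
Variable x : KQ.
Lemma kqmul_is_linear : linear (kqmul x).
Proof.
move=> c y y'; rewrite !kqmulE -lincomb_funZ -lincomb_funD.
by apply: eq_lincomb => p _; rewrite linearP.
Qed.
HB.instance Definition _ := GRing.isLinear.Build K KQ KQ *:%R (kqmul x) kqmul_is_linear.
End FixedLeft.

Lemma kqmul_lincombr x y : kqmul x y = lincomb (fun q => kqmul x (kqbasis K q)) y.
Proof. by rewrite -{1}[y]lincomb_basis_id lincomb_comp. Qed.

Lemma kqmul_linearl y : linear (fun x => kqmul x y).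
Proof. by move=> c x x'; rewrite !kqmulE linearP. Qed.

Lemma kqmulDl x x' y : kqmul (x + x') y = kqmul x y + kqmul x' y.
Proof. by rewrite !kqmulE linearD. Qed.

Lemma kqmul0l y : kqmul 0 y = 0.
Proof. by rewrite kqmulE linear0. Qed.

Lemma kqcat_ptrivr p w : kqcat p (ptriv w) = if pend p == w then kqbasis K p else 0.
Proof. by rewrite /kqcat pcat_ptrivr; case: eqP. Qed.

Lemma kqmul_basis_cat y p q :
  kqmul (kqmul y (kqbasis K p)) (kqbasis K q) =
  if pcat p q is Some r then kqmul y (kqbasis K r) else 0.
Proof.
have cat_q p' : lincomb (kqcat^~ q) (kqcat p' p) =
    if obind (pcat p') (pcat p q) is Some r then kqbasis K r else 0.
  rewrite -pcatA [kqcat p' p]/kqcat; case: (pcat p' p) => [s|] /=; last exact: linear0.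
  by rewrite lincomb_basis.
case pq: (pcat p q) => [r|]; rewrite !kqmul_basisr lincomb_comp; last rewrite -(lincomb_fun0 KQ y).
all: by apply: eq_lincomb => p' _ /=; rewrite cat_q pq.
Qed.

End LinearCombinations.

Section Modules.
Variables (K : fieldType) (Q : quiver) (V : lmodType K) (act : V -> KQ K Q -> V).
Hypothesis act_mod : is_kqmod act.

Lemma act_linear x : linear (act^~ x).
Proof. by move=> c u v; rewrite (actDl act_mod) (actZl act_mod). Qed.

Lemma act0r v : act v 0 = 0.
Proof. by apply: (@addrI _ (act v 0)); rewrite -(actDr act_mod) !addr0. Qed.

Lemma act_lincomb v x : act v x = lincomb (fun p => act v (kqbasis K p)) x.
Proof.
rewrite -{1}[x]lincomb_basis_id /lincomb (big_morph (act v) (actDr act_mod v) (act0r v)).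
by apply: eq_bigr => p _; rewrite (actZr act_mod).
Qed.

Lemma act_basis_cat v p q : act (act v (kqbasis K p)) (kqbasis K q) =
  if pcat p q is Some r then act v (kqbasis K r) else 0.
Proof. by rewrite (actA act_mod) kqmul_basis /kqcat; case: (pcat p q); rewrite ?act0r. Qed.

End Modules.

Section RepresentationModule.
Variables (K : fieldType) (Q : quiver) (V : lmodType K).
Variables (proj : vert Q -> V -> V) (arrv : arr Q -> V -> V).
Hypothesis proj_linear : forall w, linear (proj w).
Hypothesis arrv_linear : forall a, linear (arrv a).
Hypothesis proj_proj : forall w w' v, proj w (proj w' v) = if w' == w then proj w' v else 0.
Hypothesis proj_arrv : forall w a v, proj w (arrv a v) = if tgt a == w then arrv a v else 0.
Hypothesis proj_supp : forall v, exists s : seq (vert Q), v = \sum_(w <- s) proj w v.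

Definition arrows_action (s : seq (arr Q)) (v : V) : V := foldl (fun u a => arrv a u) v s.

Section FixedArrows.
Variable s : seq (arr Q).
Lemma arrows_action_is_linear : linear (arrows_action s).
Proof.
elim: s => [|a t IHt] c u v //.
by rewrite /arrows_action /= -!/(arrows_action t _) arrv_linear IHt.
Qed.
HB.instance Definition _ :=
  GRing.isLinear.Build K V V *:%R (arrows_action s) arrows_action_is_linear.
End FixedArrows.

Definition path_action (p : qpath Q) (v : V) : V := arrows_action (parrs p) (proj (pstart p) v).

Section FixedPath.
Variable p : qpath Q.
Lemma path_action_is_linear : linear (path_action p).
Proof. by move=> c u v; rewrite /path_action proj_linear linearP. Qed.
HB.instance Definition _ :=
  GRing.isLinear.Build K V V *:%R (path_action p) path_action_is_linear.
End FixedPath.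

Definition rep_action (v : V) (x : KQ K Q) : V := lincomb (path_action^~ v) x.

Lemma proj_arrows_action w w' s v :
  proj w (arrows_action s (proj w' v)) =
  if last w' (map (@tgt Q) s) == w then arrows_action s (proj w' v) else 0.
Proof.
elim: s w' v => [|a s IHs] w' v /=; first exact: proj_proj.
have -> : arrv a (proj w' v) = proj (tgt a) (arrv a (proj w' v)) by rewrite proj_arrv eqxx.
exact: IHs.
Qed.

Lemma path_action_cat p q v :
  path_action q (path_action p v) = if pcat p q is Some r then path_action r v else 0.
Proof.
rewrite {1}/path_action {1}/path_action proj_arrows_action -/(pend p).
have [e|ne] := eqVneq (pend p) (pstart q); last by rewrite pcat_undefined // linear0.
by rewrite (pcat_defined e) /path_action /arrows_action /= foldl_cat.
Qed.

Lemma path_action_ptriv w v : path_action (ptriv w) v = proj w v.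
Proof. by []. Qed.

Lemma path_action_parr p a r v :
  pcat p (parr a) = Some r -> path_action r v = arrv a (path_action p v).
Proof.
case/pcat_parr_Some => sr ar _.
by rewrite /path_action sr ar /arrows_action foldl_rcons.
Qed.

Lemma rep_action_kqmod : is_kqmod rep_action.
Proof.
split; rewrite /rep_action.
- by move=> u v x; rewrite -lincomb_funD; apply: eq_lincomb => p _ /=; rewrite linearD.
- by move=> v x y; rewrite linearD.
- by move=> c v x; rewrite -lincomb_funZ; apply: eq_lincomb => p _; rewrite linearZ.
- by move=> c v x; rewrite linearZ.
- move=> v x y; rewrite kqmulE lincomb_comp.
  under [RHS]eq_lincomb => p _ do rewrite lincomb_comp.
  rewrite -lincomb_swap; apply: eq_lincomb => q _.
  rewrite lincomb_comp; apply: eq_lincomb => p _ /=.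
  by rewrite path_action_cat /kqcat; case: pcat => [r|]; rewrite ?lincomb_basis ?linear0.
- move=> v; have [s {2}->] := proj_supp v.
  exists (\sum_(w <- s) kqbasis K (ptriv w)); rewrite linear_sum.
  by apply: eq_bigr => w _ /=; rewrite lincomb_basis.
Qed.

End RepresentationModule.

Section LinearSection.
Variables (K : fieldType) (E M : lmodType K) (f : {linear E -> M}).
Hypothesis f_surj : forall m, exists e, f e = m.

(* Graphs of linear maps g defined on a subspace of M with f (g m) = m. *)
Definition partial_section (G : M * E -> Prop) :=
  [/\ forall z z', G z -> G z' -> G (z + z'),
      forall c z, G z -> G (c *: z),
      forall z, G z -> f z.2 = z.1 &
      forall e, G (0, e) -> e = 0].

Lemma partial_section_chain (F : (M * E -> Prop) -> Prop) :
  (forall G, F G -> partial_section G) ->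
  classical_sets.total_on F classical_sets.subset ->
  partial_section (classical_sets.bigcup F id).
Proof.
move=> FP Ftot; split.
- move=> z z' [G FG Gz] [G' FG' G'z'].
  have [GG'|G'G] := Ftot G G' FG FG'.
    by exists G' => //; case: (FP G' FG') => + _ _ _; apply; [apply: GG'|].
  by exists G => //; case: (FP G FG) => + _ _ _; apply; [|apply: G'G].
- by move=> c z [G FG Gz]; exists G => //; case: (FP G FG) => _ + _ _; apply.
- by move=> z [G FG Gz]; case: (FP G FG) => _ _ + _; apply.
- by move=> e [G FG Gz]; case: (FP G FG) => _ _ _; apply.
Qed.

Lemma partial_section_extend G m0 : partial_section G -> ~ (exists e, G (m0, e)) ->
  exists2 G', partial_section G' & classical_sets.proper G G'.
Proof.
case=> GD GZ Gf G0 Gm0.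
have [e0 fe0 e00] : exists2 e0, f e0 = m0 & m0 = 0 -> e0 = 0.
  have [->|m0_neq0] := eqVneq m0 0; first by exists 0; rewrite ?linear0.
  by have [e0 fe0] := f_surj m0; exists e0 => // m0_eq0; rewrite m0_eq0 eqxx in m0_neq0.
pose G0' z := G z \/ z = 0.
have G0'D z z' : G0' z -> G0' z' -> G0' (z + z').
  by case=> [Gz|->]; case=> [Gz'|->]; rewrite ?addr0 ?add0r; [left; apply: GD| left | left | right].
have G0'Z c z : G0' z -> G0' (c *: z) by case=> [Gz|->]; [left; apply: GZ | right; rewrite scaler0].
pose v0 : M * E := (m0, e0).
exists (fun z => exists c, G0' (z - c *: v0)); first split.
- move=> z z' [c Gz] [c' Gz']; exists (c + c').
  by rewrite scalerDl opprD addrACA; apply: G0'D.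
- by move=> k z [c Gz]; exists (k * c); rewrite -scalerA -scalerBr; apply: G0'Z.
- move=> [m e] [c [/Gf /=|]].
    by rewrite linearB linearZ fe0 => /(congr1 (+%R^~ (c *: m0))); rewrite !subrK.
  by move/eqP; rewrite subr_eq0 => /eqP [-> ->]; rewrite linearZ fe0.
- move=> e [c [Gz|]]; last first.
    move/eqP; rewrite subr_eq0 => /eqP [/esym/eqP].
    by rewrite scaler_eq0 => /orP [/eqP->|/eqP/e00->] ->; rewrite ?scale0r ?scaler0.
  have [c0|c_neq0] := eqVneq c 0; first by move: Gz; rewrite c0 scale0r subr0 => /G0.
  exfalso; apply: Gm0; exists (e0 - c^-1 *: e).
  suff -> : (m0, e0 - c^-1 *: e) = - c^-1 *: ((0, e) - c *: v0) by apply: GZ.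
  apply: injective_projections => /=.
    by rewrite scalerBr scaler0 add0r scalerA mulNr mulVf // scaleN1r opprK.
  by rewrite scalerBr scalerA mulNr mulVf // scaleN1r opprK scaleNr addrC.
split.
- by move=> z Gz; exists 0; rewrite scale0r subr0; left.
move=> GG'; apply: Gm0; exists e0; apply: GG'; exists 1.
by rewrite scale1r subrr; right.
Qed.

Lemma linear_section : exists g : {linear M -> E}, cancel g f.
Proof.
have [G [[GD GZ Gf G0] Gmax]] : exists G, partial_section G /\
    forall G', classical_sets.proper G G' -> ~ partial_section G'.
  apply: classical_sets.Zorn_bigcup => F FP Ftot.
  exact: (partial_section_chain FP Ftot).
have Gtotal m : exists e, G (m, e).
  apply: contrapT => Gm; have [G' G'P GG'] := partial_section_extend (And4 GD GZ Gf G0) Gm.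
  exact: Gmax GG' G'P.
pose g m := projT1 (cid (Gtotal m)).
have Gg m : G (m, g m) by rewrite /g; case: cid.
have G_fun m e e' : G (m, e) -> G (m, e') -> e = e'.
  move=> Ge Ge'; apply/eqP; rewrite -subr_eq0; apply/eqP/G0.
  suff -> : (0, e - e') = (m, e) + (-1) *: (m, e') by apply: GD => //; apply: GZ.
  by apply: injective_projections; rewrite /= scaleN1r ?subrr.
have g_lin : linear g.
  by move=> c m m'; apply: (G_fun _ _ _ (Gg _) (GD _ _ (GZ c _ (Gg m)) (Gg m'))).
pose gL : {linear M -> E} := HB.pack g (GRing.isLinear.Build K M E *:%R g g_lin).
exists gL => m.
exact: (Gf (m, g m)).
Qed.

End LinearSection.

Section Subquiver.
Variables (Q : quiver) (P : subquiver Q).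
Local Notation R := (sub_quiver P).
Implicit Types (p q r : qpath R).

Lemma valid_path_val (v : vert R) (s : seq (arr R)) :
  valid_path (v, s) = valid_path (val v, map val s).
Proof. by rewrite /valid_path; case: s => [|a s] //=; rewrite path_map. Qed.

Lemma plift_valid p : valid_path (val (pstart p), map val (parrs p)).
Proof. by rewrite -valid_path_val -surjective_pairing; apply: valP. Qed.

Definition plift p : qpath Q := exist (@valid_path Q) _ (plift_valid p).

Lemma pend_plift p : pend (plift p) = val (pend p).
Proof. by rewrite /pend -(last_map val) -!map_comp. Qed.

Lemma plift_inj : injective plift.
Proof.
move=> p q [/val_inj e /(inj_map val_inj) e']; apply: val_inj.
by rewrite [val p]surjective_pairing [val q]surjective_pairing; congr pair.
Qed.

Lemma pcat_plift p q : pcat (plift p) (plift q) = omap plift (pcat p q).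
Proof.
have [e|ne] := eqVneq (pend p) (pstart q).
  have e' : pend (plift p) = pstart (plift q) by rewrite pend_plift e.
  rewrite (pcat_defined e) (pcat_defined e') /=; congr Some; apply: val_inj.
  by rewrite /= map_cat.
by rewrite !pcat_undefined // pend_plift /pstart /= val_eqE.
Qed.

Lemma plift_ptriv (w : vert R) : plift (ptriv w) = ptriv (val w).
Proof. exact: val_inj. Qed.

Lemma plift_parr (a : arr R) : plift (parr a) = parr (val a).
Proof. exact: val_inj. Qed.

Lemma plift_exists (p : qpath Q) : sv P (pstart p) -> all (sa P) (parrs p) ->
  exists p', plift p' = p.
Proof.
move=> Ps Pa; set s := pmap insub (parrs p) : seq (arr R).
have s_val : map val s = parrs p.
  by elim: (parrs p) Pa @s => //= a t IHt /andP [Pa_a /IHt]; rewrite insubT /= => ->.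
have Vs : valid_path (Sub (pstart p) Ps : vert R, s).
  by rewrite valid_path_val /= s_val -surjective_pairing; apply: valP.
by exists (Sub _ Vs); apply: val_inj; rewrite /= s_val -surjective_pairing.
Qed.

Definition pres (p : qpath Q) : option (qpath R) :=
  if pselect (exists p', plift p' = p) is left ex then Some (projT1 (cid ex)) else None.

Lemma pres_plift p : pres (plift p) = Some p.
Proof.
rewrite /pres; case: pselect => [ex|[]]; last by exists p.
by case: cid => p' /= /plift_inj ->.
Qed.

Lemma pres_Some (p : qpath Q) p' : pres p = Some p' -> p = plift p'.
Proof. by rewrite /pres; case: pselect => // ex [<-]; case: cid. Qed.

Lemma pres_cat_None (p : qpath Q) q (r : qpath Q) :
  pres p = None -> pcat p (plift q) = Some r -> pres r = None.
Proof.
move=> p_out /pcat_Some [_ Er]; case r_in: (pres r) => [r'|] //.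
have := congr1 val (pres_Some r_in); rewrite Er /= => -[sr ar].
have Ps : sv P (pstart p) by rewrite sr; apply: valP.
have Pa : all (sa P) (parrs p).
  have : all (sa P) (map val (parrs r')) by apply/allP => _ /mapP [b _ ->]; apply: valP.
  by rewrite -ar all_cat => /andP [].
have [p' pp'] := plift_exists Ps Pa.
by rewrite -pp' pres_plift in p_out.
Qed.

End Subquiver.

Section SubquiverAlgebra.
Variables (K : fieldType) (Q : quiver) (P : subquiver Q).
Local Notation R := (sub_quiver P).

Definition kqlift : KQ K R -> KQ K Q := lincomb (fun p => kqbasis K (plift p)).
HB.instance Definition _ :=
  GRing.isLinear.Build K (KQ K R) (KQ K Q) *:%R kqlift (lincomb_is_linear _).

Definition kqres : KQ K Q -> KQ K R :=
  lincomb (fun p => if pres P p is Some p' then kqbasis K p' else 0).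
HB.instance Definition _ :=
  GRing.isLinear.Build K (KQ K Q) (KQ K R) *:%R kqres (lincomb_is_linear _).

Lemma kqres_basis p : kqres (kqbasis K p) = if pres P p is Some p' then kqbasis K p' else 0.
Proof. exact: lincomb_basis. Qed.

Lemma kqres_lift n : kqres (kqlift n) = n.
Proof.
rewrite /kqlift lincomb_comp -[RHS]lincomb_basis_id.
by apply: eq_lincomb => p _ /=; rewrite kqres_basis pres_plift.
Qed.

Lemma kqres_mul_lift y q :
  kqres (kqmul y (kqbasis K (plift q))) = kqmul (kqres y) (kqbasis K q).
Proof.
rewrite !kqmul_basisr lincomb_comp [kqres y]/kqres lincomb_comp.
apply: eq_lincomb => p _ /=; case p_in: (pres P p) => [p'|].
  rewrite (pres_Some p_in) lincomb_basis /kqcat pcat_plift.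
  by case: (pcat p' q) => [r|] /=; rewrite ?kqres_basis ?pres_plift ?linear0.
rewrite linear0 /kqcat; case pq: pcat => [r|]; last exact: linear0.
by rewrite kqres_basis (pres_cat_None p_in pq).
Qed.

End SubquiverAlgebra.

Section GFunctor.
Variables (K : fieldType) (Q : quiver) (X : rep K Q).
Implicit Types (m : GX X) (w : vert Q) (a : arr Q).

Lemma gtriv_linear w : linear (fun m => gtriv m w).
Proof. by move=> c m m'; rewrite /gtriv -linearP. Qed.

Lemma garr_linear a : linear (fun m => garr m a).
Proof. by move=> c m m'; rewrite /garr -linearP -linearP. Qed.

Lemma gtriv_gtriv m w w' : gtriv (gtriv m w) w' = if w == w' then gtriv m w else 0.
Proof.
rewrite /gtriv; have [<-|ne] := eqVneq w w'; first by rewrite dinj_self.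
by rewrite dinj_other // linear0.
Qed.

Lemma gtriv_garr m a w : gtriv (garr m a) w = if tgt a == w then garr m a else 0.
Proof.
rewrite /gtriv /garr; have [<-|ne] := eqVneq (tgt a) w; first by rewrite dinj_self.
by rewrite dinj_other // linear0.
Qed.

Section FixedVector.
Variable m : GX X.
Lemma gact_is_linear : linear (gact m).
Proof. exact: lincomb_is_linear. Qed.
HB.instance Definition _ := GRing.isLinear.Build K _ _ *:%R (gact m) gact_is_linear.
End FixedVector.

Lemma gactZ m c x : gact m (c *: x) = c *: gact m x.
Proof. exact: linearZ. Qed.

Lemma gactE m x : gact m x = lincomb (gpath m) x.
Proof. by []. Qed.

Lemma gact_basis m p : gact m (kqbasis K p) = gpath m p.
Proof. exact: lincomb_basis. Qed.

End GFunctor.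

Section ExtensionMaps.
Variables (K : fieldType) (Q : quiver) (M : lmodType K) (actM : M -> KQ K Q -> M).
Variables (E : lmodType K) (actE : E -> KQ K Q -> E).
Hypothesis E_mod : is_kqmod actE.

Lemma kqhom_regular_linear (i : KQ K Q -> E) :
  is_kqhom (@kqmul K Q) actE i -> injective i -> linear i.
Proof.
move=> [iD i_act] i_inj c n n'; rewrite iD; congr (_ + _).
have [x ix] := act_unital E_mod (i n).
have nx : kqmul n x = n by apply: i_inj; rewrite i_act.
by rewrite -{1}nx -linearZ i_act (actZr E_mod) ix.
Qed.

Lemma kqhom_linear (f : E -> M) :
  (forall m c x, actM m (c *: x) = c *: actM m x) ->
  is_kqhom actE actM f -> linear f.
Proof.
move=> actMZ [fD f_act] c e e'; rewrite fD; congr (_ + _).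
have [x ex] := act_unital E_mod e.
by rewrite -{1}ex -(actZr E_mod) f_act actMZ -f_act ex.
Qed.

End ExtensionMaps.

Section TwistedExtension.
Variables (K : fieldType) (Q : quiver) (X : rep K Q).
Local Unset Implicit Arguments.
Variable h : forall a : arr Q, rsp X (src a) -> KQ K Q.
Hypothesis h_linear : forall a, linear (h a).
Local Set Implicit Arguments.
Local Notation V := (KQ K Q * GX X)%type.

Definition vproj (w : vert Q) (v : V) : V := (kqmul v.1 (kqbasis K (ptriv w)), gtriv v.2 w).

(* The factor e_(tgt a) puts the twist into KQ e_(tgt a) whatever the values of h. *)
Definition varr (a : arr Q) (v : V) : V :=
  (kqmul v.1 (kqbasis K (parr a)) + kqmul (h a (v.2 (src a))) (kqbasis K (ptriv (tgt a))),
   garr v.2 a).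

Lemma vproj_linear w : linear (vproj w).
Proof.
move=> c [y m] [y' m']; apply: injective_projections => /=.
  exact: kqmul_linearl.
exact: gtriv_linear.
Qed.

Lemma varr_linear a : linear (varr a).
Proof.
move=> c [y m] [y' m']; apply: injective_projections => /=; last exact: garr_linear.
by rewrite h_linear !kqmul_linearl scalerDr addrACA.
Qed.

Lemma vproj_vproj w w' v : vproj w (vproj w' v) = if w' == w then vproj w' v else 0.
Proof. by rewrite /vproj /= kqmul_basis_cat pcat_ptrivr gtriv_gtriv /pend /=; case: eqP. Qed.

Lemma vproj_varr w a v : vproj w (varr a v) = if tgt a == w then varr a v else 0.
Proof.
rewrite /vproj /varr /= kqmulDl !kqmul_basis_cat !pcat_ptrivr gtriv_garr /pend /=.
by case: eqP => //; rewrite addr0.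
Qed.

Lemma vproj_supp v : exists s, v = \sum_(w <- s) vproj w v.
Proof.
case: v => y m; set s := undup (map (@pend Q) (dsupp y) ++ dsupp m); exists s.
rewrite pair_sumE /=; congr pair.
  rewrite -[y in LHS]lincomb_basis_id.
  under eq_bigr do rewrite kqmul_basisr.
  rewrite -lincomb_fun_sum; apply: eq_lincomb => p py.
  rewrite (bigD1_seq (pend p)) ?undup_uniq ?mem_undup ?mem_cat ?map_f //= kqcat_ptrivr eqxx.
  by rewrite big1 => [|w ne]; [exact/esym/addr0 | rewrite kqcat_ptrivr eq_sym (negbTE ne)].
rewrite -[m in LHS]dsum_rec_dinj_id.
rewrite (@dsum_recE _ _ _ _ _ (fun w => @dinj_is_linear _ _ _ w) s) ?undup_uniq // => w.
by move=> /mem_dsupp mw; rewrite mem_undup mem_cat mw orbT.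
Qed.

Definition actV := rep_action vproj varr.

Lemma actV_mod : is_kqmod actV.
Proof. exact: rep_action_kqmod vproj_linear varr_linear vproj_vproj vproj_varr vproj_supp. Qed.

Lemma actV_inl (y : KQ K Q) x : actV (y, 0) x = (kqmul y x, 0).
Proof.
have path_inl p : path_action vproj varr p (y, 0) = (kqmul y (kqbasis K p), 0).
  elim/path_ind: p => [w|p a r pa_r IHp].
    by rewrite path_action_ptriv /vproj /= /gtriv /= linear0.
  rewrite (path_action_parr vproj varr _ pa_r) IHp /varr /= kqmul_basis_cat pa_r.
  by rewrite linear_fun0 // kqmul0l addr0 /garr /= !linear0.
rewrite /actV /rep_action [in RHS]kqmul_lincombr lincomb_pair /=; congr pair.
  by apply: eq_lincomb => p _; rewrite path_inl.
by rewrite -[RHS](lincomb_fun0 _ x); apply: eq_lincomb => p _; rewrite path_inl.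
Qed.

Lemma actV_snd v x : (actV v x).2 = gact v.2 x.
Proof.
have arrows_snd s u : (arrows_action varr s u).2 = foldl (@garr K Q X) u.2 s.
  by elim: s u => //= a s IHs u; rewrite IHs.
by rewrite /actV /rep_action lincomb_pair gactE; apply: eq_lincomb => p _ /=; rewrite arrows_snd.
Qed.

Lemma twisted_extension_splits : ext1_zero (@gact K Q X) (@kqmul K Q) ->
  exists sig : GX X -> V, is_kqhom (@gact K Q X) actV sig /\ forall m, (sig m).2 = m.
Proof.
move=> GX_ext1; case: (GX_ext1 V actV actV_mod (fun y => (y, 0)) snd).
- split=> [y y'|y x]; last by rewrite actV_inl.
  by apply: injective_projections; rewrite /= ?addr0.
- by split=> [//|v x]; rewrite actV_snd.
- by move=> y y' [].
- by move=> m; exists (0, m).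
- by case=> y m /=; split=> [->|[y' [_ <-]]] //; exists y.
by move=> sig [sig_hom sigK]; exists sig.
Qed.

End TwistedExtension.
Arguments vproj {K Q X} w v.

Section Restriction.
Variables (K : fieldType) (Q : quiver) (X : rep K Q) (P : subquiver Q).
Local Notation R := (sub_quiver P).
Local Notation XP := (rep_restrict X P).
Implicit Types (m : GX X).

Definition gext (m0 : GX XP) : GX X := dsum_rec (fun w : vert R => @dinj K _ (rsp X) (val w)) m0.
HB.instance Definition _ := GRing.isLinear.Build K _ _ *:%R gext
  (dsum_rec_is_linear (fun w => @dinj_is_linear _ _ _ (val w))).

Lemma gres_supp m : fin_supp (fun w : vert R => m (val w) : rsp XP w).
Proof. by exists (pmap insub (dsupp m)) => w /mem_dsupp; rewrite mem_pmap_sub. Qed.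

Definition gres m : GX XP := DSum (gres_supp m).

Lemma gresE m w : gres m w = m (val w).
Proof. by []. Qed.

Lemma gres_is_linear : linear gres.
Proof. by move=> c m m'; apply: dsum_ext. Qed.
HB.instance Definition _ := GRing.isLinear.Build K _ _ *:%R gres gres_is_linear.

Lemma gext_eval (m0 : GX XP) (w : vert R) : gext m0 (val w) = m0 w.
Proof.
rewrite /gext dsum_sumE -/(dsum_rec (fun v u => @dinj K _ (rsp X) (val v) u (val w)) m0).
rewrite (@dsum_rec_single _ _ _ _ _ w) ?dinj_self // => [v|v u ne].
  by move=> c u u'; rewrite linearP.
by rewrite dinj_other //; apply: contra ne => /eqP/val_inj ->.
Qed.

Lemma gres_gext (m0 : GX XP) : gres (gext m0) = m0.
Proof. by apply: dsum_ext => w; rewrite gresE gext_eval. Qed.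

Lemma gext_gtriv (m0 : GX XP) (w : vert R) : gext (gtriv m0 w) = gtriv (gext m0) (val w).
Proof. by rewrite /gtriv gext_eval; apply: dsum_rec_dinj => v; apply: dinj_is_linear. Qed.

Lemma gext_garr (m0 : GX XP) (a : arr R) : gext (garr m0 a) = garr (gext m0) (val a).
Proof.
by rewrite /garr (gext_eval m0 (src a)); apply: dsum_rec_dinj => v; apply: dinj_is_linear.
Qed.

Lemma gext_gact (m0 : GX XP) x : gext (gact m0 x) = gact (gext m0) (kqlift x).
Proof.
have gext_gpath p : gext (gpath m0 p) = gpath (gext m0) (plift p).
  rewrite /gpath; change (pstart (plift p)) with (val (pstart p)).
  change (parrs (plift p)) with (map val (parrs p)).
  rewrite -gext_gtriv; elim: (parrs p) (gtriv m0 (pstart p)) => //= a s IHs m.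
  by rewrite -gext_garr IHs.
rewrite gactE lincomb_comp /kqlift lincomb_comp.
by apply: eq_lincomb => p _ /=; rewrite gact_basis gext_gpath.
Qed.

Lemma gres_gtriv m (w : vert R) : gres (gtriv m (val w)) = @dinj K _ (rsp XP) w (m (val w)).
Proof.
apply: dsum_ext => v; rewrite gresE /gtriv.
have [<-|ne] := eqVneq w v; first by rewrite !dinj_self.
by rewrite !dinj_other // -val_eqE.
Qed.

Lemma gres_garr m (a : arr R) :
  gres (garr m (val a)) = @dinj K _ (rsp XP) (tgt a) (rmap X (val a) (m (val (src a)))).
Proof.
apply: dsum_ext => v; rewrite gresE /garr.
have [<-|ne] := eqVneq (tgt a) v; first by rewrite !dinj_self.
by rewrite !dinj_other // -val_eqE.
Qed.

End Restriction.

Section RestrictedExtension.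
Local Unset Implicit Arguments.
Variables (K : fieldType) (Q : quiver) (X : rep K Q) (P : subquiver Q).
Local Notation R := (sub_quiver P).
Local Notation XP := (rep_restrict X P).

Variables (E : lmodType K) (actE : E -> KQ K R -> E).
Hypothesis E_mod : is_kqmod actE.
Variables (inj : {linear KQ K R -> E}) (pr : {linear E -> GX XP}) (sec : {linear GX XP -> E}).
Hypothesis inj_act : forall n x, inj (kqmul n x) = actE (inj n) x.
Hypothesis pr_act : forall e x, pr (actE e x) = gact (pr e) x.
Hypothesis inj_inj : injective inj.
Hypothesis ker_pr : forall e, pr e = 0 <-> exists n, inj n = e.
Hypothesis secK : cancel sec pr.

Lemma pr_inj n : pr (inj n) = 0.
Proof. by apply/ker_pr; exists n. Qed.

Definition evert (w : vert R) (e : E) : E := actE e (kqbasis K (ptriv w)).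
Definition earr (a : arr R) (e : E) : E := actE e (kqbasis K (parr a)).
Section Generators.
Variables (w : vert R) (a : arr R).
HB.instance Definition _ := GRing.isLinear.Build K E E *:%R (evert w) (act_linear E_mod _).
HB.instance Definition _ := GRing.isLinear.Build K E E *:%R (earr a) (act_linear E_mod _).
End Generators.

Lemma evert_earr a e : evert (tgt a) (earr a e) = earr a e.
Proof. by rewrite /evert /earr act_basis_cat // pcat_ptrivr /pend /= eqxx. Qed.

Definition lift_vert (w : vert R) (u : rsp X (val w)) : E :=
  evert w (sec (@dinj K _ (rsp XP) w u)).
Section Vertex.
Variable w : vert R.
Lemma lift_vert_is_linear : linear (lift_vert w).
Proof. by move=> c u v; rewrite /lift_vert !linearP. Qed.
HB.instance Definition _ := GRing.isLinear.Build K _ E *:%R (lift_vert w) lift_vert_is_linear.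
End Vertex.

Lemma pr_lift_vert w u : pr (lift_vert w u) = @dinj K _ (rsp XP) w u.
Proof. by rewrite pr_act secK gact_basis /gpath /= /gtriv dinj_self. Qed.

Lemma evert_lift_vert w w' u :
  evert w' (lift_vert w u) = if w == w' then lift_vert w u else 0.
Proof. by rewrite /lift_vert /evert act_basis_cat // pcat_ptrivr; case: eqP. Qed.

Lemma earr_lift_vert a w u : w != src a -> earr a (lift_vert w u) = 0.
Proof. by rewrite /lift_vert /earr act_basis_cat // pcat_ptrivl => /negbTE ->. Qed.

Definition defect (a : arr R) (u : rsp X (src (val a))) : E :=
  earr a (lift_vert (src a) u) - lift_vert (tgt a) (rmap X (val a) u).

Lemma evert_defect a u : evert (tgt a) (defect a u) = defect a u.
Proof. by rewrite /defect linearB /= evert_earr evert_lift_vert eqxx. Qed.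

Lemma defect_in_image a u : exists n, inj n = defect a u.
Proof.
apply/ker_pr; rewrite linearB pr_act pr_lift_vert gact_basis pr_lift_vert.
by rewrite /gpath /= /garr /gtriv !dinj_self subrr.
Qed.

Definition cocycle a u : KQ K R := projT1 (cid (defect_in_image a u)).

Lemma inj_cocycle a u : inj (cocycle a u) = defect a u.
Proof. by rewrite /cocycle; case: cid. Qed.

Section Arrow.
Variable a : arr R.
Lemma cocycle_is_linear : linear (cocycle a).
Proof.
move=> c u v; apply: inj_inj; rewrite linearP !inj_cocycle /defect !linearP /=.
by rewrite scalerN scalerBr addrACA.
Qed.
HB.instance Definition _ := GRing.isLinear.Build K _ _ *:%R (cocycle a) cocycle_is_linear.
End Arrow.

Definition cocycleQ (a : arr Q) (u : rsp X (src a)) : KQ K Q :=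
  if pselect (sa P a) is left Pa then kqlift (cocycle (Sub a Pa) u) else 0.

Lemma cocycleQ_linear a : linear (cocycleQ a).
Proof.
by move=> c u v; rewrite /cocycleQ; case: pselect => Pa; rewrite ?linearP ?scaler0 ?addr0.
Qed.

Lemma cocycleQ_val (a : arr R) u : cocycleQ (val a) u = kqlift (cocycle a u).
Proof.
case: a u => a Pa u; rewrite /cocycleQ; case: pselect => [Pa'|[] //].
by rewrite (bool_irrelevance Pa' Pa).
Qed.

Local Notation V := (KQ K Q * GX X)%type.
Local Notation varr := (varr cocycleQ).

Definition liftG (m0 : GX XP) : E := dsum_rec lift_vert m0.
HB.instance Definition _ := GRing.isLinear.Build K _ _ *:%R liftG
  (dsum_rec_is_linear lift_vert_is_linear).

Lemma liftG_dinj w u : liftG (@dinj K _ (rsp XP) w u) = lift_vert w u.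
Proof. exact: dsum_rec_dinj lift_vert_is_linear w u. Qed.

Lemma pr_liftG m0 : pr (liftG m0) = m0.
Proof.
rewrite dsum_rec_comp -[RHS]dsum_rec_dinj_id; apply: dsum_rec_eq => w.
exact: pr_lift_vert.
Qed.

Lemma evert_liftG w m0 : evert w (liftG m0) = lift_vert w (m0 w).
Proof.
rewrite dsum_rec_comp (@dsum_rec_single _ _ _ _ _ w) /= ?evert_lift_vert ?eqxx //.
  by move=> v c u u'; rewrite !linearP.
by move=> v u /negbTE ne; rewrite evert_lift_vert ne.
Qed.

Lemma earr_liftG a m0 : earr a (liftG m0) = earr a (lift_vert (src a) (m0 (src a))).
Proof.
rewrite dsum_rec_comp (@dsum_rec_single _ _ _ _ _ (src a)) //.
  by move=> v c u u'; rewrite !linearP.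
by move=> v u; apply: earr_lift_vert.
Qed.

Definition resE (v : V) : E := inj (kqres P v.1) + liftG (gres P v.2).
Lemma resE_is_linear : linear resE.
Proof. by move=> c [y m] [y' m']; rewrite /resE /= !linearP scalerDr addrACA. Qed.
HB.instance Definition _ := GRing.isLinear.Build K _ _ *:%R resE resE_is_linear.

Lemma resE_vproj (w : vert R) v : resE (vproj (val w) v) = evert w (resE v).
Proof.
case: v => y m; rewrite /resE /vproj /= linearD /= evert_liftG.
by rewrite -(plift_ptriv w) kqres_mul_lift inj_act gres_gtriv liftG_dinj.
Qed.

Lemma resE_varr (a : arr R) v : resE (varr (val a) v) = earr a (resE v).
Proof.
case: v => y m; rewrite /resE /varr /= !linearD /= earr_liftG.
rewrite -(plift_ptriv (tgt a)) -(plift_parr a) !kqres_mul_lift !inj_act.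
rewrite cocycleQ_val kqres_lift inj_cocycle gres_garr -/(earr a _) -/(evert _ _).
by rewrite evert_defect liftG_dinj /defect -addrA subrK.
Qed.

Lemma resE_actV v x : resE (actV cocycleQ v (kqlift x)) = actE (resE v) x.
Proof.
have resE_path p : resE (path_action vproj varr (plift p) v) = actE (resE v) (kqbasis K p).
  elim/path_ind: p => [w|p a r pa_r IHp].
    by rewrite plift_ptriv path_action_ptriv resE_vproj.
  have lift_pa_r : pcat (plift p) (parr (val a)) = Some (plift r).
    by rewrite -plift_parr pcat_plift pa_r.
  by rewrite (path_action_parr vproj varr _ lift_pa_r) resE_varr IHp /earr act_basis_cat // pa_r.
rewrite /actV /rep_action /kqlift lincomb_comp lincomb_comp (act_lincomb E_mod).
by apply: eq_lincomb => p _ /=; rewrite lincomb_basis resE_path.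
Qed.

Lemma restricted_extension_splits : ext1_zero (@gact K Q X) (@kqmul K Q) ->
  exists sigma : GX XP -> E, is_kqhom (@gact K R XP) actE sigma /\ cancel sigma pr.
Proof.
move=> /(twisted_extension_splits cocycleQ_linear) [sig [[sigD sig_act] sigK]].
exists (fun m0 => resE (sig (gext m0))); split; first split.
- by move=> m m'; rewrite linearD sigD linearD.
- by move=> m0 x; rewrite gext_gact sig_act resE_actV.
by move=> m0; rewrite linearD /= pr_inj add0r sigK gres_gext pr_liftG.
Qed.

End RestrictedExtension.

Lemma ext1_zero_subquiver (K : fieldType) (Q : quiver) (X : rep K Q) (P : subquiver Q) :
  ext1_zero (@gact K Q X) (@kqmul K Q) ->
  ext1_zero (@gact K (sub_quiver P) (rep_restrict X P)) (@kqmul K (sub_quiver P)).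
Proof.
move=> GX_ext1 E actE E_mod i pi i_hom pi_hom i_inj pi_surj ker_pi.
have i_lin := kqhom_regular_linear E_mod i_hom i_inj.
have pi_lin := kqhom_linear E_mod (@gactZ _ _ _) pi_hom.
pose inj : {linear _ -> E} := HB.pack i (GRing.isLinear.Build K _ _ *:%R i i_lin).
pose pr : {linear E -> _} := HB.pack pi (GRing.isLinear.Build K _ _ *:%R pi pi_lin).
have [sec secK] := linear_section (f := pr) pi_surj.
exact: (restricted_extension_splits _ _ _ _ _ _ E_mod inj pr sec
          i_hom.2 pi_hom.2 i_inj ker_pi secK GX_ext1).
Qed.

Theorem proposition1p8 (K : closedFieldType) (Q : quiver) (X : rep K Q) :
  ext1_zero (@gact K Q X) (@kqmul K Q) ->
  forall P : subquiver Q, closed_subquiver P ->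
  ext1_zero (@gact K (sub_quiver P) (rep_restrict X P)) (@kqmul K (sub_quiver P)).
Proof. by move=> GX_ext1 P _; apply: ext1_zero_subquiver. Qed.
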